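(* Let $n\ge 2r$. Let $\bm{U}_r,\bm{V}_r\in\mathbb{R}^{n\times r}$ have orthonormal columns spanning the column and row spaces of a rank-$r$ matrix $\bm{X}^\star\in\mathbb{R}^{n\times n}$, and let $\widetilde{\bm{U}}_r,\widetilde{\bm{V}}_r\in\mathbb{R}^{n\times r}$ have orthonormal columns. Let $\bm{U}_r^T\widetilde{\bm{U}}_r=\bm{L}_L\cos(\bm{\Gamma})\bm{R}_L^T$ and $\bm{V}_r^T\widetilde{\bm{V}}_r=\bm{L}_R\cos(\bm{H})\bm{R}_R^T$ be SVDs, with $\bm{L}_L,\bm{R}_L,\bm{L}_R,\bm{R}_R\in\mathbb{R}^{r\times r}$ orthogonal and $\bm{\Gamma}=\mathrm{diag}(\gamma_1,\dots,\gamma_r)$, $\bm{H}=\mathrm{diag}(\eta_1,\dots,\eta_r)$ the diagonal matrices of principal angles (in $[0,\pi/2]$) between $\mathrm{span}(\bm{U}_r)$ and $\mathrm{span}(\widetilde{\bm{U}}_r)$, respectively between $\mathrm{span}(\bm{V}_r)$ and $\mathrm{span}(\widetilde{\bm{V}}_r)$. Define $$\bm{A}_{cc}=\bm{L}_L\cos(\bm{\Gamma})\bm{R}_L^T\bm{R}_R\cos(\bm{H})\bm{L}_R^T,\quad \bm{A}_{cs}=\bm{L}_L\cos(\bm{\Gamma})\bm{R}_L^T\bm{R}_R\sin(\bm{H})\bm{L}_R^T,$$ $$\bm{A}_{sc}=\bm{L}_L\sin(\bm{\Gamma})\bm{R}_L^T\bm{R}_R\cos(\bm{H})\bm{L}_R^T,\quad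 \bm{A}_{ss}=\bm{L}_L\sin(\bm{\Gamma})\bm{R}_L^T\bm{R}_R\sin(\bm{H})\bm{L}_R^T.$$ Let $\lambda\ge0$ and $\bm{W}_0=\bm{U}_r\bm{V}_r^T-\lambda\mathcal{P}_{\mathcal{T}}(\widetilde{\bm{U}}_r\widetilde{\bm{V}}_r^T)$. Then $$\|\bm{W}_0\|_F=\alpha_1,\quad \|\lambda\mathcal{P}_{\mathcal{T}^\perp}(\widetilde{\bm{U}}_r\widetilde{\bm{V}}_r^T)\|=\alpha_2,\quad \|\bm{W}_0\|_{\mu(\infty,2)}\le\alpha_3\beta,\quad \|\bm{W}_0\|_{\mu(\infty)}\le\alpha_3\beta,$$ where $$\alpha_1^2=\|\bm{I}_r-\lambda\bm{A}_{cc}\|_F^2+\|\lambda\bm{A}_{cs}\|_F^2+\|\lambda\bm{A}_{sc}\|_F^2,\quad \alpha_2=\|\lambda\bm{A}_{ss}\|,$$ $$\alpha_3=\|\bm{I}_r-\lambda\bm{A}_{cc}\|+\|\lambda\bm{A}_{sc}\|+\|\lambda\bm{A}_{cs}\|,\quad \beta=1\vee\sqrt{2\max_i\frac{\breve{\mu}_i}{\mu_i}}\vee\sqrt{2\max_j\frac{\breve{\nu}_j}{\nu_j}}.$$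
   Context: Notation: $\|\cdot\|$ spectral norm, $\|\cdot\|_F$ Frobenius norm, $a\vee b=\max\{a,b\}$, $\bm{e}_i$ standard basis vectors; $\cos(\bm{\Gamma})=\mathrm{diag}(\cos\gamma_1,\dots,\cos\gamma_r)$ and similarly for $\sin$ and for $\bm{H}$. $\mathcal{P}_{\mathcal{T}}(\bm{X})=\bm{U}_r\bm{U}_r^T\bm{X}+\bm{X}\bm{V}_r\bm{V}_r^T-\bm{U}_r\bm{U}_r^T\bm{X}\bm{V}_r\bm{V}_r^T$, $\mathcal{P}_{\mathcal{T}^\perp}(\bm{X})=\bm{X}-\mathcal{P}_{\mathcal{T}}(\bm{X})$. Leverage scores: for a subspace $\mathcal{S}$ of dimension $d$ with orthonormal basis matrix $\bm{S}$, $\mu_i(\mathcal{S})=\frac{n}{d}\|\bm{S}^T\bm{e}_i\|_2^2$; $\mu_i=\mu_i(\mathrm{span}(\bm{U}_r))$, $\nu_j=\mu_j(\mathrm{span}(\bm{V}_r))$ (assumed positive), $\breve{\mu}_i=\mu_i(\mathrm{span}([\bm{U}_r,\widetilde{\bm{U}}_r]))$, $\breve{\nu}_j=\mu_j(\mathrm{span}([\bm{V}_r,\widetilde{\bm{V}}_r]))$. Norms: $\|\bm{X}\|_{\mu(\infty)}=\max_{i,j}\sqrt{\frac{n}{\mu_i r}}|X_{ij}|\sqrt{\frac{n}{\nu_j r}}$, $\|\bm{X}\|_{\mu(\infty,2)}=\max\{\max_i\sqrt{\frac{n}{\mu_i r}}\|\bm{X}^T\bm{e}_i\|_2,\max_j\sqrt{\frac{n}{\nu_j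 r}}\|\bm{X}\bm{e}_j\|_2\}$. *)

From HB Require Import structures.
From mathcomp Require Import all_boot all_order all_algebra.
From mathcomp Require Import all_classical all_reals all_analysis.
Set Implicit Arguments. Unset Strict Implicit. Unset Printing Implicit Defensive.
Import Order.TTheory GRing.Theory Num.Theory.
Local Open Scope ring_scope.
Local Open Scope classical_set_scope.

Definition vnorm {R : realType} {p : nat} (v : 'cV[R]_p) : R :=
  Num.sqrt (\sum_(i < p) v i 0 ^+ 2).

Definition specnorm {R : realType} {m p : nat} (A : 'M[R]_(m, p)) : R :=
  sup [set y : R | exists x : 'cV[R]_p, vnorm x <= 1 /\ y = vnorm (A *m x)].

Definition fnorm {R : realType} {m p : nat} (A : 'M[R]_(m, p)) : R :=
  Num.sqrt (\sum_(i < m) \sum_(j < p) A i j ^+ 2).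

Definition PT {R : realType} {n r : nat} (U V : 'M[R]_(n, r)) (X : 'M[R]_n) : 'M[R]_n :=
  U *m U^T *m X + X *m V *m V^T - U *m U^T *m X *m V *m V^T.
Definition PTperp {R : realType} {n r : nat} (U V : 'M[R]_(n, r)) (X : 'M[R]_n) : 'M[R]_n :=
  X - PT U V X.

Definition lev {R : realType} {n d : nat} (S : 'M[R]_(n, d)) (i : 'I_n) : R :=
  (n%:R / d%:R) * \sum_(k < d) S i k ^+ 2.

(* ||X||_{mu(infty)} with mu_i = lev U i, nu_j = lev V j *)
Definition mu_inf_norm {R : realType} {n r : nat} (U V : 'M[R]_(n, r)) (X : 'M[R]_n) : R :=
  \big[Num.max/0]_(i < n) \big[Num.max/0]_(j < n)
     (Num.sqrt (n%:R / (lev U i * r%:R)) * `|X i j| * Num.sqrt (n%:R / (lev V j * r%:R))).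

Definition mu_inf2_norm {R : realType} {n r : nat} (U V : 'M[R]_(n, r)) (X : 'M[R]_n) : R :=
  Num.max
    (\big[Num.max/0]_(i < n) (Num.sqrt (n%:R / (lev U i * r%:R)) * vnorm (X^T *m delta_mx i 0)))
    (\big[Num.max/0]_(j < n) (Num.sqrt (n%:R / (lev V j * r%:R)) * vnorm (X *m delta_mx j 0))).

Definition diag_of {R : realType} {r : nat} (f : R -> R) (g : 'I_r -> R) : 'M[R]_r :=
  diag_mx (\row_i f (g i)).

From HB Require Import structures.
From mathcomp Require Import all_boot all_order all_algebra.
From mathcomp Require Import all_classical all_reals all_analysis.
From mathcomp Require Import ring lra.
Import Order.TTheory GRing.Theory Num.Theory.
Local Open Scope ring_scope.
Set Implicit Arguments. Unset Strict Implicit. Unset Printing Implicit Defensive.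

(* Write [Ut = U C + G S] with [C = LL cos(gam) RL^T] and [S = LL sin(gam) RL^T], where
   [G] is a partial isometry with [U^T G = 0] whose range lies in span [U, Ut]; likewise
   [Vt = V C' + H S'].  Expanding [Ut Vt^T] into four blocks, [P_T] keeps the three that
   meet [U] or [V], so that
     [W0 = U (I - lam Acc) V^T - G (lam Asc) V^T - U (lam Acs) H^T] and
     [P_T^perp (Ut Vt^T) = G Ass H^T].
   The three blocks of [W0] are mutually orthogonal and [G], [H] are isometric on the
   ranges involved, which gives the two identities.  For the incoherence norms, row [i]
   of [W0] is bounded by the spectral norms of the blocks times [|U^T e_i|] and
   [|G^T e_i|]; the first is [sqrt (mu_i r / n)], and since [U U^T + G G^T] is a
   projection inside span [U, Ut], of dimension at most [2 r], the second is at most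
   [sqrt (2 mu'_i r / n)]. *)

Lemma mul_divff (F : fieldType) (x : F) : x / x * x = x.
Proof. by have [->|x0] := eqVneq x 0; rewrite ?mulr0 // divff ?mul1r. Qed.

Lemma invf_divff (F : fieldType) (x : F) : x^-1 * (x / x) = x^-1.
Proof. by have [->|x0] := eqVneq x 0; rewrite ?invr0 ?mul0r // divff ?mulr1. Qed.

Lemma sqrtr_mul_sqr (F : rcfType) (x v : F) :
  0 <= x -> 0 <= v -> Num.sqrt x * v = Num.sqrt (x * v ^+ 2).
Proof. by move=> x_ge0 v_ge0; rewrite sqrtrM // sqrtr_sqr ger0_norm. Qed.

Section EuclideanNorm.
Variable R : realType.
Implicit Types (p q : nat).

Definition vdot p (x y : 'cV[R]_p) : R := (x^T *m y) 0 0.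

Lemma vdotC p (x y : 'cV[R]_p) : vdot x y = vdot y x.
Proof. by rewrite /vdot !mxE; apply: eq_bigr => i _; rewrite !mxE mulrC. Qed.

Lemma vdotDr p (x y z : 'cV[R]_p) : vdot x (y + z) = vdot x y + vdot x z.
Proof. by rewrite /vdot mulmxDr mxE. Qed.

Lemma vdotZr p a (x y : 'cV[R]_p) : vdot x (a *: y) = a * vdot x y.
Proof. by rewrite /vdot -scalemxAr mxE. Qed.

Lemma vdotNr p (x y : 'cV[R]_p) : vdot x (- y) = - vdot x y.
Proof. by rewrite -scaleN1r vdotZr mulN1r. Qed.

Lemma vdotBr p (x y z : 'cV[R]_p) : vdot x (y - z) = vdot x y - vdot x z.
Proof. by rewrite vdotDr vdotNr. Qed.

Lemma vdotZl p a (x y : 'cV[R]_p) : vdot (a *: x) y = a * vdot x y.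
Proof. by rewrite vdotC vdotZr vdotC. Qed.

Lemma vdotBl p (x y z : 'cV[R]_p) : vdot (x - y) z = vdot x z - vdot y z.
Proof. by rewrite vdotC vdotBr !(vdotC z). Qed.

Lemma vdot_mulmx p q (A : 'M[R]_(p, q)) x y : vdot x (A *m y) = vdot (A^T *m x) y.
Proof. by rewrite /vdot trmx_mul trmxK mulmxA. Qed.

Lemma vdot_delta_mx p q (A : 'M[R]_(p, q)) i j :
  A i j = vdot (delta_mx i 0) (A *m delta_mx j 0).
Proof.
rewrite -colE /vdot trmx_delta mxE (bigD1 i) //= big1 => [|k ki].
  by rewrite !mxE !eqxx mul1r addr0.
by rewrite !mxE eqxx (negPf ki) mul0r.
Qed.

Lemma vdotxx p (x : 'cV[R]_p) : vdot x x = \sum_i x i 0 ^+ 2.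
Proof. by rewrite /vdot mxE; apply: eq_bigr => i _; rewrite mxE expr2. Qed.

Lemma vdotxx_ge0 p (x : 'cV[R]_p) : 0 <= vdot x x.
Proof. by rewrite vdotxx sumr_ge0 // => i _; apply: sqr_ge0. Qed.

Lemma vnormE p (x : 'cV[R]_p) : vnorm x = Num.sqrt (vdot x x).
Proof. by rewrite vdotxx. Qed.

Lemma vnorm_ge0 p (x : 'cV[R]_p) : 0 <= vnorm x.
Proof. exact: sqrtr_ge0. Qed.

Lemma sqr_vnorm p (x : 'cV[R]_p) : vnorm x ^+ 2 = vdot x x.
Proof. by rewrite vnormE sqr_sqrtr // vdotxx_ge0. Qed.

Lemma ler_vnorm p q (x : 'cV[R]_p) (y : 'cV[R]_q) :
  (vnorm x <= vnorm y) = (vdot x x <= vdot y y).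
Proof. by rewrite !vnormE ler_sqrt // vdotxx_ge0. Qed.

Lemma vnorm_eq0 p (x : 'cV[R]_p) : (vnorm x == 0) = (x == 0).
Proof.
apply/idP/eqP => [|->]; last by rewrite vnormE /vdot mulmx0 mxE sqrtr0.
rewrite vnormE sqrtr_eq0 vdotxx le_eqVlt ltNge sumr_ge0 ?orbF => [|i _]; last first.
  exact: sqr_ge0.
rewrite psumr_eq0 => [/allP x0|i _]; last exact: sqr_ge0.
apply/matrixP => i j; rewrite ord1 mxE.
by have /= := x0 i (mem_index_enum _); rewrite sqrf_eq0 => /eqP.
Qed.

Lemma vnorm0 p : vnorm (0 : 'cV[R]_p) = 0.
Proof. by apply/eqP; rewrite vnorm_eq0. Qed.

Lemma vnormZ p a (x : 'cV[R]_p) : vnorm (a *: x) = `|a| * vnorm x.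
Proof.
by rewrite !vnormE vdotZl vdotZr mulrA -expr2 sqrtrM ?sqr_ge0 // sqrtr_sqr.
Qed.

Lemma vnormN p (x : 'cV[R]_p) : vnorm (- x) = vnorm x.
Proof. by rewrite -scaleN1r vnormZ normrN1 mul1r. Qed.

Lemma vdot_le p (x y : 'cV[R]_p) : vdot x y <= vnorm x * vnorm y.
Proof.
have [->|x0] := eqVneq x 0; first by rewrite /vdot trmx0 mul0mx mxE mulr_ge0 ?vnorm_ge0.
have [->|y0] := eqVneq y 0; first by rewrite /vdot mulmx0 mxE mulr_ge0 ?vnorm_ge0.
set a := vnorm x; set b := vnorm y.
have a_gt0 : 0 < a by rewrite lt_def vnorm_eq0 x0 vnorm_ge0.
have b_gt0 : 0 < b by rewrite lt_def vnorm_eq0 y0 vnorm_ge0.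
(* expand [0 <= |b x - a y|^2 = 2ab (ab - <x, y>)] *)
have := vdotxx_ge0 (b *: x - a *: y).
rewrite !(vdotBl, vdotBr, vdotZl, vdotZr) -!sqr_vnorm (vdotC y x) -/a -/b => h.
have : 0 <= 2 * a * b * (a * b - vdot x y) by nra.
by rewrite pmulr_rge0 ?subr_ge0 // !mulr_gt0.
Qed.

Lemma normr_vdot_le p (x y : 'cV[R]_p) : `|vdot x y| <= vnorm x * vnorm y.
Proof.
have := vdot_le (- x) y; rewrite vnormN -scaleN1r vdotZl mulN1r.
by rewrite ler_norml vdot_le andbT lerNl.
Qed.

Lemma vnormD_le p (x y : 'cV[R]_p) : vnorm (x + y) <= vnorm x + vnorm y.
Proof.
rewrite -(ger0_norm (addr_ge0 (vnorm_ge0 x) (vnorm_ge0 y))) -sqrtr_sqr.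
rewrite vnormE ler_sqrt ?sqr_ge0 // sqrrD !sqr_vnorm.
rewrite vdotDr !(vdotC (x + y)) !vdotDr (vdotC y x).
have := vdot_le x y; lra.
Qed.

Lemma vnormB_le p (x y : 'cV[R]_p) : vnorm (x - y) <= vnorm x + vnorm y.
Proof. by rewrite -(vnormN y) vnormD_le. Qed.

Lemma sqr_vnorm_mulmx p q (A : 'M[R]_(p, q)) x :
  vnorm (A *m x) ^+ 2 = vdot x (A^T *m A *m x).
Proof. by rewrite sqr_vnorm vdot_mulmx mulmxA vdotC. Qed.

Lemma mulTmx_self_eq0 p q (A : 'M[R]_(p, q)) : A^T *m A = 0 -> A = 0.
Proof.
move=> AA; apply/matrixP => i j.
have : vnorm (A *m delta_mx j 0) ^+ 2 == 0.
  by rewrite sqr_vnorm_mulmx AA mul0mx /vdot mulmx0 mxE.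
by rewrite sqrf_eq0 vnorm_eq0 -colE => /eqP/matrixP/(_ i 0); rewrite !mxE.
Qed.

Lemma vnorm_mulmx_id p q (A : 'M[R]_(p, q)) x :
  A^T *m A *m x = x -> vnorm (A *m x) = vnorm x.
Proof. by move=> Ax; rewrite !vnormE vdot_mulmx mulmxA Ax. Qed.

Lemma vnorm_proj_le p (P : 'M[R]_p) x :
  P^T = P -> P *m P = P -> vnorm (P *m x) <= vnorm x.
Proof.
move=> Ps Pi; rewrite ler_vnorm.
have Pxx : vdot (P *m x) x = vdot (P *m x) (P *m x).
  by rewrite vdot_mulmx Ps mulmxA Pi.
have := vdotxx_ge0 (x - P *m x).
rewrite vdotBl !vdotBr (vdotC x (P *m x)) Pxx; lra.
Qed.

Definition partial_isometry p q (G : 'M[R]_(p, q)) := G *m G^T *m G = G.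

Lemma partial_isometry_tr p q (G : 'M[R]_(p, q)) :
  partial_isometry G -> partial_isometry G^T.
Proof. by move=> GG; rewrite /partial_isometry trmxK -{4}GG !trmx_mul trmxK mulmxA. Qed.

Lemma vnorm_partial_isometry_le p q (G : 'M[R]_(p, q)) x :
  partial_isometry G -> vnorm (G *m x) <= vnorm x.
Proof.
move=> GG; set P := G^T *m G.
have Ps : P^T = P by rewrite trmx_mul trmxK.
have Pi : P *m P = P by rewrite /P -!mulmxA (mulmxA G) GG.
apply: le_trans (vnorm_proj_le x Ps Pi) => //.
by rewrite ler_vnorm [X in X <= _]vdot_mulmx mulmxA vdot_mulmx Ps mulmxA Pi.
Qed.

End EuclideanNorm.

Section FrobeniusNorm.
Variable R : realType.
Implicit Types (m p : nat).

Lemma fnorm_ge0 m p (A : 'M[R]_(m, p)) : 0 <= fnorm A.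
Proof. exact: sqrtr_ge0. Qed.

Lemma tr_mulTmx m p (A : 'M[R]_(m, p)) : \tr (A^T *m A) = \sum_i \sum_j A i j ^+ 2.
Proof.
rewrite /mxtrace exchange_big; apply: eq_bigr => j _; rewrite mxE.
by apply: eq_bigr => i _; rewrite !mxE expr2.
Qed.

Lemma fnormE m p (A : 'M[R]_(m, p)) : fnorm A = Num.sqrt (\tr (A^T *m A)).
Proof. by rewrite tr_mulTmx. Qed.

Lemma sqr_fnorm m p (A : 'M[R]_(m, p)) : fnorm A ^+ 2 = \tr (A^T *m A).
Proof.
rewrite fnormE sqr_sqrtr // tr_mulTmx.
by apply/sumr_ge0 => i _; apply/sumr_ge0 => j _; apply: sqr_ge0.
Qed.

Lemma fnormN m p (A : 'M[R]_(m, p)) : fnorm (- A) = fnorm A.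
Proof. by rewrite !fnormE [(- A)^T]raddfN mulNmx mulmxN opprK. Qed.

Lemma sqr_fnormD_orth m p (A B : 'M[R]_(m, p)) :
  \tr (A^T *m B) = 0 -> fnorm (A + B) ^+ 2 = fnorm A ^+ 2 + fnorm B ^+ 2.
Proof.
move=> AB; have BA : \tr (B^T *m A) = 0 by rewrite -mxtrace_tr trmx_mul trmxK.
by rewrite !sqr_fnorm [(A + B)^T]raddfD /= mulmxDl !mulmxDr !mxtraceD AB BA addr0 add0r.
Qed.

Lemma fnorm_mulmx_idl m k p (G : 'M[R]_(m, k)) (M : 'M[R]_(k, p)) :
  G^T *m G *m M = M -> fnorm (G *m M) = fnorm M.
Proof. by move=> GM; rewrite !fnormE trmx_mul -mulmxA (mulmxA G^T) GM. Qed.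

Lemma fnorm_mulmx_idr m k p (G : 'M[R]_(p, k)) (M : 'M[R]_(m, k)) :
  M *m (G^T *m G) = M -> fnorm (M *m G^T) = fnorm M.
Proof.
move=> MG; rewrite !fnormE trmx_mul trmxK mxtrace_mulC !mulmxA -(mulmxA M) MG.
by rewrite mxtrace_mulC.
Qed.

End FrobeniusNorm.

Section SpectralNorm.
Variable R : realType.
Implicit Types (p q : nat).
Local Open Scope classical_set_scope.

Lemma vnorm_mulmx_le_fnorm p q (A : 'M[R]_(p, q)) x : vnorm (A *m x) <= fnorm A * vnorm x.
Proof.
have sqA_ge0 : 0 <= \sum_i \sum_j A i j ^+ 2.
  by apply/sumr_ge0 => i _; apply/sumr_ge0 => j _; apply: sqr_ge0.
rewrite /fnorm {1}/vnorm vnormE -sqrtrM // ler_sqrt ?mulr_ge0 ?vdotxx_ge0 //.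
rewrite mulr_suml; apply: ler_sum => i _.
set a := (row i A)^T.
have -> : (A *m x) i 0 = vdot a x.
  by rewrite /vdot trmxK !mxE; apply: eq_bigr => j _; rewrite !mxE.
have -> : \sum_j A i j ^+ 2 = vdot a a by rewrite vdotxx; apply: eq_bigr => j _; rewrite !mxE.
have := normr_vdot_le a x; have := normr_ge0 (vdot a x).
by rewrite -(real_normK (num_real (vdot a x))) -!sqr_vnorm; nra.
Qed.

Lemma specnorm_has_sup p q (A : 'M[R]_(p, q)) :
  has_sup [set y | exists x, vnorm x <= 1 /\ y = vnorm (A *m x)].
Proof.
split; first by exists 0, 0; rewrite vnorm0 mulmx0 vnorm0 ler01.
exists (fnorm A) => _ [x [x1 ->]]; apply: le_trans (vnorm_mulmx_le_fnorm A x) _.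
by rewrite ler_piMr ?fnorm_ge0.
Qed.

Lemma specnorm_ub p q (A : 'M[R]_(p, q)) x : vnorm x <= 1 -> vnorm (A *m x) <= specnorm A.
Proof. by move=> x1; apply: ub_le_sup; [case: (specnorm_has_sup A) | exists x]. Qed.

Lemma specnorm_ge0 p q (A : 'M[R]_(p, q)) : 0 <= specnorm A.
Proof. by have := specnorm_ub A (x := 0); rewrite mulmx0 !vnorm0 ler01; apply. Qed.

Lemma vnorm_mulmx_le p q (A : 'M[R]_(p, q)) x : vnorm (A *m x) <= specnorm A * vnorm x.
Proof.
have [->|x0] := eqVneq x 0; first by rewrite mulmx0 !vnorm0 mulr0.
have x_gt0 : 0 < vnorm x by rewrite lt_def vnorm_eq0 x0 vnorm_ge0.
have := specnorm_ub A (x := (vnorm x)^-1 *: x).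
rewrite -scalemxAr !vnormZ ger0_norm ?invr_ge0 ?vnorm_ge0 // mulVf ?gt_eqF // lexx.
by rewrite mulrC ler_pdivrMr // => /(_ isT).
Qed.

Lemma vnorm_trmx_mulmx_le p q (A : 'M[R]_(p, q)) x :
  vnorm (A^T *m x) <= specnorm A * vnorm x.
Proof.
set y := A^T *m x.
have [->|y0] := eqVneq y 0; first by rewrite vnorm0 mulr_ge0 ?specnorm_ge0 ?vnorm_ge0.
have y_gt0 : 0 < vnorm y by rewrite lt_def vnorm_eq0 y0 vnorm_ge0.
(* [|y|^2 = <x, A y> <= |x| |A| |y|] with [y = A^T x] *)
have : vnorm y ^+ 2 <= vnorm x * (specnorm A * vnorm y).
  rewrite sqr_vnorm {1}/y vdotC -vdot_mulmx.
  exact: le_trans (vdot_le _ _) (ler_wpM2l (vnorm_ge0 x) (vnorm_mulmx_le A y)).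
by rewrite expr2 mulrCA mulrA ler_pM2r.
Qed.

Lemma specnorm_le p q p' q' (A : 'M[R]_(p, q)) (B : 'M[R]_(p', q')) :
  (forall x, vnorm x <= 1 -> exists2 z, vnorm z <= 1 & vnorm (A *m x) <= vnorm (B *m z)) ->
  specnorm A <= specnorm B.
Proof.
move=> AB; apply: ge_sup; first by case: (specnorm_has_sup A).
by move=> _ [x [x1 ->]]; have [z z1 /le_trans] := AB x x1; apply; apply: specnorm_ub.
Qed.

Lemma specnorm_sandwich p q r (G1 : 'M[R]_(p, r)) (G2 : 'M[R]_(q, r)) (B : 'M[R]_r) :
  G1^T *m G1 *m B = B -> B *m (G2^T *m G2) = B -> partial_isometry G2 ->
  specnorm (G1 *m B *m G2^T) = specnorm B.
Proof.
move=> G1B BG2 G2pi; apply/eqP; rewrite eq_le; apply/andP; split.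
  apply: specnorm_le => x x1; exists (G2^T *m x).
    exact: le_trans (vnorm_partial_isometry_le _ (partial_isometry_tr G2pi)) x1.
  by rewrite -!mulmxA vnorm_mulmx_id // !mulmxA G1B.
apply: specnorm_le => z z1; exists (G2 *m z).
  exact: le_trans (vnorm_partial_isometry_le _ G2pi) z1.
by rewrite -!mulmxA (mulmxA G2^T) (mulmxA B) BG2 (vnorm_mulmx_id (A := G1)) // !mulmxA G1B.
Qed.

End SpectralNorm.

Section Leverage.
Variable R : realType.

Lemma orthonormal_proj_id m d p (B : 'M[R]_(m, d)) (X : 'M[R]_(m, p)) :
  B^T *m B = 1%:M -> (X^T <= B^T)%MS -> B *m B^T *m X = X.
Proof.
move=> hB /submxP [D eD].
by rewrite -(trmxK X) eD trmx_mul trmxK mulmxA -(mulmxA B) hB mulmx1.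
Qed.

Lemma orthonormal_rank_le m d k (B : 'M[R]_(m, d)) (A : 'M[R]_(k, m)) :
  B^T *m B = 1%:M -> (B^T <= A)%MS -> (d <= k)%N.
Proof.
move=> hB BA; have := mxrankM_maxl B^T B; rewrite hB mxrank1 => dB.
exact: leq_trans dB (leq_trans (mxrankS BA) (rank_leq_row A)).
Qed.

Lemma sqr_vnorm_trmx_compl_le n r d (U G : 'M[R]_(n, r)) (B : 'M[R]_(n, d)) x :
  U^T *m U = 1%:M -> U^T *m G = 0 -> partial_isometry G ->
  B^T *m B = 1%:M -> B *m B^T *m U = U -> B *m B^T *m G = G ->
  vnorm (U^T *m x) ^+ 2 + vnorm (G^T *m x) ^+ 2 <= vnorm (B^T *m x) ^+ 2.
Proof.
move=> hU hUG hG hB hBU hBG; set K := U *m U^T + G *m G^T.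
have hGU : G^T *m U = 0 by apply: trmx_inj; rewrite trmx_mul trmxK hUG trmx0.
have Ks : K^T = K by rewrite [K^T]raddfD /= !trmx_mul !trmxK.
have Ki : K *m K = K.
  rewrite mulmxDl !mulmxDr !mulmxA hG -(mulmxA U U^T U) hU -(mulmxA U U^T G) hUG.
  by rewrite -(mulmxA G G^T U) hGU !mulmx1 !mulmx0 !mul0mx addr0 add0r.
have BK : B *m B^T *m K = K by rewrite mulmxDr !mulmxA hBU hBG.
have KB : K *m (B *m B^T) = K by apply: trmx_inj; rewrite !trmx_mul trmxK Ks BK.
have -> : vnorm (U^T *m x) ^+ 2 + vnorm (G^T *m x) ^+ 2 = vnorm (K *m x) ^+ 2.
  by rewrite !sqr_vnorm_mulmx !trmxK -vdotDr -mulmxDl Ks Ki.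
rewrite !sqr_vnorm -ler_vnorm -{1}KB -!mulmxA.
apply: le_trans (vnorm_proj_le _ Ks Ki) _.
by rewrite vnorm_mulmx_id // mulmxA hB mul1mx.
Qed.

Definition lev_weight n d (S : 'M[R]_(n, d)) i : R := Num.sqrt (n%:R / (lev S i * d%:R)).

Lemma levE n d (S : 'M[R]_(n, d)) i :
  lev S i = n%:R / d%:R * vnorm (S^T *m delta_mx i 0) ^+ 2.
Proof.
rewrite /lev sqr_vnorm vdotxx; congr (_ * _); apply: eq_bigr => k _.
by rewrite -colE !mxE.
Qed.

Lemma lev_ge0 n d (S : 'M[R]_(n, d)) i : 0 <= lev S i.
Proof. by rewrite levE mulr_ge0 ?divr_ge0 ?sqr_ge0. Qed.

Lemma lev_weight_vnorm_le1 n d (S : 'M[R]_(n, d)) i :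
  lev_weight S i * vnorm (S^T *m delta_mx i 0) <= 1.
Proof.
have ratio_le1 (a b w : R) : a / (a / b * w * b) * w <= 1.
  have [->|an0] := eqVneq a 0; first by rewrite !mul0r.
  have [->|bn0] := eqVneq b 0; first by rewrite invr0 !(mulr0, mul0r) invr0 mulr0 mul0r.
  rewrite [a / b * w * b]mulrAC divfK // invfM mulVKf //.
  by have [->|wn0] := eqVneq w 0; rewrite ?invr0 ?mul0r // mulVf.
rewrite /lev_weight sqrtr_mul_sqr ?vnorm_ge0 //; last first.
  exact: divr_ge0 (ler0n _ _) (mulr_ge0 (lev_ge0 S i) (ler0n _ _)).
by rewrite -[leRHS]sqrtr1 ler_sqrt // levE ratio_le1.
Qed.

Lemma lev_weight_le n d k d' (S : 'M[R]_(n, d)) (G : 'M[R]_(n, k)) (B : 'M[R]_(n, d')) i :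
  (d' <= 2 * d)%N ->
  vnorm (G^T *m delta_mx i 0) ^+ 2 <= vnorm (B^T *m delta_mx i 0) ^+ 2 ->
  lev_weight S i * vnorm (G^T *m delta_mx i 0) <= Num.sqrt (2 * (lev B i / lev S i)).
Proof.
move=> dd' GB; set L := lev S i.
have w_ge0 : 0 <= n%:R / (L * d%:R).
  exact: divr_ge0 (ler0n _ _) (mulr_ge0 (lev_ge0 S i) (ler0n _ _)).
rewrite /lev_weight sqrtr_mul_sqr ?vnorm_ge0 // -/L ler_sqrt; last first.
  exact: mulr_ge0 (ler0n _ 2) (divr_ge0 (lev_ge0 B i) (lev_ge0 S i)).
have [->|L0] := eqVneq L 0; first by rewrite !(mul0r, invr0, mulr0).
have d0 : d%:R != 0 :> R.
  by apply: contraNneq L0 => d0; rewrite /L levE d0 invr0 !(mulr0, mul0r).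
move: dd' GB; rewrite [lev B i]levE; case: d' B => [B _|d' B dd' GB].
  by rewrite [B^T *m _]flatmx0 vnorm0 expr0n /= !(mulr0, mul0r); apply: mulr_ge0_le0.
apply: le_trans (ler_wpM2l w_ge0 GB) _.
set b2 := vnorm _ ^+ 2.
have -> : 2 * (n%:R / d'.+1%:R * b2 / L) = 2 * d%:R / d'.+1%:R * (n%:R / (L * d%:R) * b2).
  by field; rewrite d0 L0 addrC natr1 pnatr_eq0.
apply: ler_peMl; first exact: mulr_ge0 w_ge0 (sqr_ge0 _).
by rewrite ler_pdivlMr ?ltr0Sn // mul1r -natrM ler_nat.
Qed.

End Leverage.

Section ComplementBasis.
Variable R : realType.

Lemma diag_ofM r (f h : R -> R) (g : 'I_r -> R) :
  diag_of f g *m diag_of h g = diag_of (fun x => f x * h x) g.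
Proof. by rewrite /diag_of mulmx_diag; congr diag_mx; apply/rowP => i; rewrite !mxE. Qed.

Lemma tr_diag_of r (f : R -> R) (g : 'I_r -> R) : (diag_of f g)^T = diag_of f g.
Proof. exact: tr_diag_mx. Qed.

Lemma eq_diag_of r (f h : R -> R) (g : 'I_r -> R) :
  (forall i, f (g i) = h (g i)) -> diag_of f g = diag_of h g.
Proof. by move=> fh; congr diag_mx; apply/rowP => i; rewrite !mxE fh. Qed.

Variables (n r : nat) (U Ut : 'M[R]_(n, r)) (L Q : 'M[R]_r) (gam : 'I_r -> R).

(* The columns of [(Ut - U U^T Ut) Q] are orthogonal with norms [|sin gam|]; dividing by
   [sin gam] (with [0^-1 = 0]) leaves them orthonormal or zero. *)
Definition compl_basis : 'M[R]_(n, r) :=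
  (Ut - U *m (U^T *m Ut)) *m Q *m diag_of (fun x => (sin x)^-1) gam *m L^T.

Hypotheses (hU : U^T *m U = 1%:M) (hUt : Ut^T *m Ut = 1%:M).
Hypotheses (hL : L^T *m L = 1%:M) (hQ : Q^T *m Q = 1%:M).
Hypothesis hsvd : U^T *m Ut = L *m diag_of cos gam *m Q^T.

Local Notation G := compl_basis.
Local Notation M := (Ut - U *m (U^T *m Ut)).
Local Notation c := (diag_of cos gam).
Local Notation s := (diag_of sin gam).
Local Notation E := (diag_of (fun x => sin x / sin x) gam).

Lemma mulTmx_residual : U^T *m M = 0.
Proof. by rewrite mulmxBr (mulmxA U^T U) hU mul1mx subrr. Qed.

Lemma mulTmx_compl_basis : U^T *m G = 0.
Proof. by rewrite /compl_basis !(mulmxA U^T) mulTmx_residual !mul0mx. Qed.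

Lemma gram_residual : (M *m Q)^T *m (M *m Q) = s *m s.
Proof.
have UCM : (U *m (U^T *m Ut))^T *m M = 0.
  by rewrite trmx_mul -mulmxA mulTmx_residual mulmx0.
have UtU : Ut^T *m U = (U^T *m Ut)^T by rewrite trmx_mul trmxK.
have cs1 : c *m c + s *m s = 1%:M.
  by rewrite !diag_ofM; apply/matrixP => i j; rewrite !mxE -mulrnDl -!expr2 cos2Dsin2.
have MtM : M^T *m M = Q *m (s *m s) *m Q^T.
  have -> : s *m s = 1%:M - c *m c by rewrite -cs1 addrC addKr.
  rewrite [M^T]raddfB /= mulmxBl UCM subr0 mulmxBr hUt (mulmxA Ut^T U) UtU hsvd.
  rewrite mulmxBr mulmxBl mulmx1 (mulmx1C hQ) !trmx_mul trmxK tr_diag_mx.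
  by rewrite !mulmxA -(mulmxA _ L^T) hL mulmx1.
by rewrite trmx_mul -mulmxA (mulmxA M^T) MtM !mulmxA hQ mul1mx -mulmxA hQ mulmx1.
Qed.

Lemma residual_sin_support : M *m Q *m E = M *m Q.
Proof.
set N := M *m Q; set D := diag_of (fun x => sin x / sin x - 1) gam.
have ED : E - 1%:M = D by apply/matrixP => i j; rewrite !mxE mulrnBl.
apply/eqP; rewrite -subr_eq0 -{2}[N]mulmx1 -mulmxBr ED; apply/eqP/mulTmx_self_eq0.
rewrite trmx_mul -mulmxA (mulmxA N^T) gram_residual tr_diag_of !diag_ofM.
apply/matrixP => i j; rewrite !mxE; set x := sin (gam i).
have dx : (x / x - 1) * x = 0 by rewrite mulrBl mul1r mul_divff subrr.
by rewrite !mulrA dx !mul0r mul0rn.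
Qed.

Lemma compl_basis_decomp : Ut = U *m (L *m c *m Q^T) + G *m (L *m s *m Q^T).
Proof.
have GS : G *m (L *m s *m Q^T) = M.
  rewrite /compl_basis -!mulmxA (mulmxA L^T) hL mul1mx (mulmxA (diag_of _ gam)) diag_ofM.
  rewrite (eq_diag_of (h := fun x => sin x / sin x)) => [|i]; last exact: mulrC.
  by rewrite (mulmxA Q) (mulmxA M) (mulmxA M) residual_sin_support -mulmxA (mulmx1C hQ) mulmx1.
by rewrite GS -hsvd addrC subrK.
Qed.

Lemma gram_compl_basis : G^T *m G = L *m E *m L^T.
Proof.
set Di := diag_of (fun x => (sin x)^-1) gam.
have -> : G^T *m G = L *m (Di *m ((M *m Q)^T *m (M *m Q)) *m Di) *m L^T.
  by rewrite /compl_basis !trmx_mul trmxK tr_diag_of !mulmxA.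
rewrite gram_residual !diag_ofM; congr (_ *m _ *m _); apply: eq_diag_of => i.
set x := sin (gam i); have [->|x0] := eqVneq x 0; first by rewrite invr0 !mul0r.
by rewrite divff // mulrA mulVf // mul1r mulfV.
Qed.

Lemma gram_compl_basis_sin : G^T *m G *m (L *m s *m Q^T) = L *m s *m Q^T.
Proof.
rewrite gram_compl_basis -!mulmxA (mulmxA L^T) hL mul1mx (mulmxA E) diag_ofM.
by rewrite (eq_diag_of (h := sin)) // => i; rewrite mul_divff.
Qed.

Lemma sin_gram_compl_basis : (L *m s *m Q^T)^T *m (G^T *m G) = (L *m s *m Q^T)^T.
Proof.
by apply: trmx_inj; rewrite trmx_mul trmxK [(G^T *m G)^T]trmx_mul trmxK gram_compl_basis_sin.
Qed.

Lemma partial_isometry_compl_basis : partial_isometry G.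
Proof.
rewrite /partial_isometry -mulmxA gram_compl_basis /compl_basis -!mulmxA.
rewrite (mulmxA L^T) hL mul1mx (mulmxA (diag_of _ gam)) diag_ofM.
by rewrite (eq_diag_of (h := fun x => (sin x)^-1)) // => i; rewrite invf_divff.
Qed.

Lemma compl_basis_proj (P : 'M[R]_n) : P *m U = U -> P *m Ut = Ut -> P *m G = G.
Proof. by move=> PU PUt; rewrite /compl_basis !mulmxA mulmxBr !mulmxA PU PUt. Qed.

Lemma lev_weight_compl_basis_le d (B : 'M[R]_(n, d)) i :
  B^T *m B = 1%:M -> (B^T == (row_mx U Ut)^T)%MS ->
  lev_weight U i * vnorm (G^T *m delta_mx i 0) <=
    Num.sqrt (2 * \big[Num.max/0]_(k < n) (lev B k / lev U k)).
Proof.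
move=> hB /andP [BUUt UUtB]; rewrite tr_row_mx col_mx_sub in UUtB.
case/andP: UUtB => /(orthonormal_proj_id hB) BU /(orthonormal_proj_id hB) BUt.
have dle : (d <= 2 * r)%N by rewrite mul2n -addnn; apply: orthonormal_rank_le hB BUUt.
have ratio_le := le_bigmax 0 (fun k => lev B k / lev U k) i.
have ratio_ge0 : 0 <= lev B i / lev U i := divr_ge0 (lev_ge0 B i) (lev_ge0 U i).
apply: le_trans (lev_weight_le _ dle _) _.
  apply: le_trans (sqr_vnorm_trmx_compl_le _ hU mulTmx_compl_basis
    partial_isometry_compl_basis hB BU (compl_basis_proj BU BUt)) .
  by rewrite lerDr sqr_ge0.
rewrite ler_sqrt; last exact: mulr_ge0 (ler0n _ 2) (le_trans ratio_ge0 ratio_le).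
by rewrite ler_pM2l.
Qed.

End ComplementBasis.

Section TangentBlocks.
Variable R : realType.
Variables (n r : nat) (U V GU GV : 'M[R]_(n, r)).
Hypotheses (hU : U^T *m U = 1%:M) (hV : V^T *m V = 1%:M).
Hypotheses (hUG : U^T *m GU = 0) (hVG : V^T *m GV = 0).

Let hGV : GV^T *m V = 0.
Proof. by apply: trmx_inj; rewrite trmx_mul trmxK hVG trmx0. Qed.

Section Projections.
Variables (CU SU CV SV : 'M[R]_r).
Let T1 := U *m (CU *m CV^T) *m V^T.
Let T2 := U *m (CU *m SV^T) *m GV^T.
Let T3 := GU *m (SU *m CV^T) *m V^T.
Let T4 := GU *m (SU *m SV^T) *m GV^T.

Let blocksE : (U *m CU + GU *m SU) *m (V *m CV + GV *m SV)^T = T1 + T2 + T3 + T4.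
Proof.
by rewrite [(_ + _)^T]raddfD /= !trmx_mul mulmxDl !mulmxDr /T1 /T2 /T3 /T4 !mulmxA !addrA.
Qed.

Let PT_T : PT U V (T1 + T2 + T3 + T4) = T1 + T2 + T3.
Proof.
have hL : U *m U^T *m (T1 + T2 + T3 + T4) = T1 + T2.
  rewrite /T1 /T2 /T3 /T4 !mulmxDr !mulmxA -!(mulmxA U U^T U) -!(mulmxA U U^T GU) hU hUG.
  by rewrite !mulmx1 !mulmx0 !mul0mx !addr0.
have hR : (T1 + T2 + T3 + T4) *m V *m V^T = T1 + T3.
  rewrite /T1 /T2 /T3 /T4 !mulmxDl -!mulmxA !(mulmxA V^T V) !(mulmxA GV^T V) hV hGV.
  by rewrite !mul1mx !mul0mx !mulmx0 !addr0.
have hLR : U *m U^T *m (T1 + T2 + T3 + T4) *m V *m V^T = T1.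
  rewrite hL /T1 /T2 !mulmxDl -!mulmxA !(mulmxA V^T V) !(mulmxA GV^T V) hV hGV.
  by rewrite !mul1mx !mul0mx !mulmx0 addr0.
by rewrite /PT hLR hL hR [T1 + T3]addrC addrA addrK.
Qed.

Lemma PT_blocks :
  PT U V ((U *m CU + GU *m SU) *m (V *m CV + GV *m SV)^T) =
  U *m (CU *m CV^T) *m V^T + U *m (CU *m SV^T) *m GV^T + GU *m (SU *m CV^T) *m V^T.
Proof. by rewrite blocksE PT_T. Qed.

Lemma PTperp_blocks :
  PTperp U V ((U *m CU + GU *m SU) *m (V *m CV + GV *m SV)^T) = GU *m (SU *m SV^T) *m GV^T.
Proof. by rewrite /PTperp blocksE PT_T addrC addKr. Qed.

End Projections.

Let isoU w : vnorm (U *m w) = vnorm w.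
Proof. by apply: vnorm_mulmx_id; rewrite hU mul1mx. Qed.

Let isoV w : vnorm (V *m w) = vnorm w.
Proof. by apply: vnorm_mulmx_id; rewrite hV mul1mx. Qed.

Definition tangent_blocks (X Y Z : 'M[R]_r) : 'M[R]_n :=
  U *m X *m V^T - GU *m Y *m V^T - U *m Z *m GV^T.

Hypotheses (pGU : partial_isometry GU) (pGV : partial_isometry GV).
Variables (X Y Z : 'M[R]_r).
Local Notation W := (tangent_blocks X Y Z).

Lemma sqr_fnorm_tangent_blocks :
  GU^T *m GU *m Y = Y -> Z *m (GV^T *m GV) = Z ->
  fnorm W ^+ 2 = fnorm X ^+ 2 + fnorm Z ^+ 2 + fnorm Y ^+ 2.
Proof.
move=> hY hZ.
have -> : W = U *m (X *m V^T - Z *m GV^T) - GU *m Y *m V^T.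
  by rewrite /tangent_blocks mulmxBr !mulmxA addrAC.
rewrite sqr_fnormD_orth; last first.
  rewrite trmx_mul mulmxN !mulmxA -(mulmxA _ U^T GU) hUG mulmx0 !mul0mx.
  by rewrite oppr0 mxtrace0.
rewrite fnormN fnorm_mulmx_idl ?hU ?mul1mx // fnorm_mulmx_idr ?hV ?mulmx1 //.
rewrite fnorm_mulmx_idl // sqr_fnormD_orth; last first.
  rewrite trmx_mul trmxK mulmxN linearN /= mxtrace_mulC !mulmxA -(mulmxA _ GV^T V) hGV.
  by rewrite mulmx0 !mul0mx mxtrace0 oppr0.
by rewrite fnormN fnorm_mulmx_idr ?hV ?mulmx1 // fnorm_mulmx_idr.
Qed.

Lemma vnorm_trmx_tangent_blocks_le x :
  vnorm (W^T *m x) <= specnorm X * vnorm (U^T *m x) + specnorm Y * vnorm (GU^T *m x)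
                      + specnorm Z * vnorm (U^T *m x).
Proof.
have -> : W^T *m x = V *m (X^T *m (U^T *m x)) - V *m (Y^T *m (GU^T *m x))
                     - GV *m (Z^T *m (U^T *m x)).
  by rewrite /tangent_blocks !(raddfB (@trmx R n n)) /= !trmx_mul !trmxK !mulmxBl -!mulmxA.
apply: le_trans (vnormB_le _ _) _; apply: lerD; first apply: le_trans (vnormB_le _ _) _.
- by apply: lerD; rewrite isoV; apply: vnorm_trmx_mulmx_le.
- by apply: le_trans (vnorm_partial_isometry_le _ pGV) _; apply: vnorm_trmx_mulmx_le.
Qed.

Lemma vnorm_tangent_blocks_le y :
  vnorm (W *m y) <= specnorm X * vnorm (V^T *m y) + specnorm Y * vnorm (V^T *m y)
                    + specnorm Z * vnorm (GV^T *m y).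
Proof.
have -> : W *m y = U *m (X *m (V^T *m y)) - GU *m (Y *m (V^T *m y))
                   - U *m (Z *m (GV^T *m y)).
  by rewrite /tangent_blocks !mulmxBl -!mulmxA.
apply: le_trans (vnormB_le _ _) _; apply: lerD; first apply: le_trans (vnormB_le _ _) _.
- apply: lerD; first by rewrite isoU; apply: vnorm_mulmx_le.
  by apply: le_trans (vnorm_partial_isometry_le _ pGU) _; apply: vnorm_mulmx_le.
- by rewrite isoU; apply: vnorm_mulmx_le.
Qed.

Lemma normr_vdot_tangent_blocks_le x y :
  `|vdot x (W *m y)| <=
    vnorm (U^T *m x) * specnorm X * vnorm (V^T *m y)
    + vnorm (GU^T *m x) * specnorm Y * vnorm (V^T *m y)
    + vnorm (U^T *m x) * specnorm Z * vnorm (GV^T *m y).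
Proof.
have bound (A B : 'M[R]_(n, r)) (M : 'M[R]_r) :
    `|vdot x (A *m M *m B^T *m y)| <= vnorm (A^T *m x) * specnorm M * vnorm (B^T *m y).
  rewrite -!mulmxA vdot_mulmx -mulrA; apply: le_trans (normr_vdot_le _ _) _.
  by apply: ler_wpM2l; [apply: vnorm_ge0 | apply: vnorm_mulmx_le].
rewrite /tangent_blocks !mulmxBl !vdotBr.
apply: le_trans (ler_normB _ _) _; apply: lerD; last exact: bound.
by apply: le_trans (ler_normB _ _) _; apply: lerD; apply: bound.
Qed.

Variable beta : R.
Hypothesis beta_ge1 : 1 <= beta.
Hypothesis hwU : forall i, lev_weight U i * vnorm (GU^T *m delta_mx i 0) <= beta.
Hypothesis hwV : forall j, lev_weight V j * vnorm (GV^T *m delta_mx j 0) <= beta.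

Let weighted_sum_le (a b c : R) : a <= 1 -> b <= beta -> c <= beta ->
  specnorm X * a + specnorm Y * b + specnorm Z * c <=
  (specnorm X + specnorm Y + specnorm Z) * beta.
Proof.
move=> a1 b_le c_le; rewrite !mulrDl.
have sXa := ler_wpM2l (specnorm_ge0 X) (le_trans a1 beta_ge1).
have sYb := ler_wpM2l (specnorm_ge0 Y) b_le.
have sZc := ler_wpM2l (specnorm_ge0 Z) c_le.
exact: lerD (lerD sXa sYb) sZc.
Qed.

Let bound_ge0 : 0 <= (specnorm X + specnorm Y + specnorm Z) * beta.
Proof. by rewrite mulr_ge0 ?addr_ge0 ?specnorm_ge0 // (le_trans ler01). Qed.

Let weighted_entry_le (w w' u g v g' : R) :
  0 <= w -> 0 <= w' -> 0 <= u -> 0 <= g -> 0 <= v -> 0 <= g' ->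
  w * u <= 1 -> w * g <= beta -> w' * v <= 1 -> w' * g' <= beta ->
  w * (u * specnorm X * v + g * specnorm Y * v + u * specnorm Z * g') * w' <=
  (specnorm X + specnorm Y + specnorm Z) * beta.
Proof.
move=> w_ge0 w'_ge0 u_ge0 g_ge0 v_ge0 g'_ge0 hu hg hv hg'.
have -> : w * (u * specnorm X * v + g * specnorm Y * v + u * specnorm Z * g') * w' =
    specnorm X * ((w * u) * (w' * v)) + specnorm Y * ((w * g) * (w' * v))
    + specnorm Z * ((w * u) * (w' * g')) by ring.
apply: weighted_sum_le.
- by rewrite mulr_ile1 ?mulr_ge0.
- by apply: le_trans hg; rewrite ler_piMr ?mulr_ge0.
- by apply: le_trans hg'; rewrite ler_piMl ?mulr_ge0.
Qed.

Lemma mu_inf2_norm_tangent_blocks_le :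
  mu_inf2_norm U V W <= (specnorm X + specnorm Y + specnorm Z) * beta.
Proof.
rewrite /mu_inf2_norm ge_max; apply/andP; split; apply: (bigmax_le _ bound_ge0) => i _.
  rewrite -/(lev_weight U i); set w := lev_weight U i.
  apply: le_trans (ler_wpM2l (sqrtr_ge0 _) (vnorm_trmx_tangent_blocks_le _)) _.
  rewrite !mulrDr !(mulrCA w); apply: weighted_sum_le; first exact: lev_weight_vnorm_le1.
    exact: hwU.
  exact: le_trans (lev_weight_vnorm_le1 U i) beta_ge1.
rewrite -/(lev_weight V i); set w := lev_weight V i.
apply: le_trans (ler_wpM2l (sqrtr_ge0 _) (vnorm_tangent_blocks_le _)) _.
rewrite !mulrDr !(mulrCA w); apply: weighted_sum_le; last exact: hwV.
  exact: lev_weight_vnorm_le1.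
exact: le_trans (lev_weight_vnorm_le1 V i) beta_ge1.
Qed.

Lemma mu_inf_norm_tangent_blocks_le :
  mu_inf_norm U V W <= (specnorm X + specnorm Y + specnorm Z) * beta.
Proof.
rewrite /mu_inf_norm; apply: (bigmax_le _ bound_ge0) => i _.
apply: (bigmax_le _ bound_ge0) => j _.
rewrite -/(lev_weight U i) -/(lev_weight V j) vdot_delta_mx.
have w_ge0 : 0 <= lev_weight U i := sqrtr_ge0 _.
have w'_ge0 : 0 <= lev_weight V j := sqrtr_ge0 _.
apply: le_trans (ler_wpM2r w'_ge0 (ler_wpM2l w_ge0 (normr_vdot_tangent_blocks_le _ _))) _.
by apply: weighted_entry_le; rewrite ?vnorm_ge0 ?lev_weight_vnorm_le1 ?hwU ?hwV.
Qed.

End TangentBlocks.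

Section PrincipalAngles.
Variable R : realType.
Variables (n r : nat) (U V Ut Vt : 'M[R]_(n, r)) (LL RL LR RR : 'M[R]_r).
Variables (gam eta : 'I_r -> R).
Hypotheses (hU : U^T *m U = 1%:M) (hV : V^T *m V = 1%:M).
Hypotheses (hUt : Ut^T *m Ut = 1%:M) (hVt : Vt^T *m Vt = 1%:M).
Hypotheses (hLL : LL^T *m LL = 1%:M) (hRL : RL^T *m RL = 1%:M).
Hypotheses (hLR : LR^T *m LR = 1%:M) (hRR : RR^T *m RR = 1%:M).
Hypothesis hsvdU : U^T *m Ut = LL *m diag_of cos gam *m RL^T.
Hypothesis hsvdV : V^T *m Vt = LR *m diag_of cos eta *m RR^T.

Local Notation GU := (compl_basis U Ut LL RL gam).
Local Notation GV := (compl_basis V Vt LR RR eta).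

Definition angle_block (f g : R -> R) : 'M[R]_r :=
  LL *m diag_of f gam *m RL^T *m RR *m diag_of g eta *m LR^T.

Let angle_blockE f g :
  LL *m diag_of f gam *m RL^T *m (LR *m diag_of g eta *m RR^T)^T = angle_block f g.
Proof. by rewrite !trmx_mul trmxK tr_diag_of !mulmxA. Qed.

Let UtVtE : Ut *m Vt^T =
  (U *m (LL *m diag_of cos gam *m RL^T) + GU *m (LL *m diag_of sin gam *m RL^T)) *m
  (V *m (LR *m diag_of cos eta *m RR^T) + GV *m (LR *m diag_of sin eta *m RR^T))^T.
Proof.
rewrite -(compl_basis_decomp hU hUt hLL hRL hsvdU).
by rewrite -(compl_basis_decomp hV hVt hLR hRR hsvdV).
Qed.

Lemma PT_principal : PT U V (Ut *m Vt^T) =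
  U *m angle_block cos cos *m V^T + U *m angle_block cos sin *m GV^T
  + GU *m angle_block sin cos *m V^T.
Proof.
by rewrite UtVtE PT_blocks ?mulTmx_compl_basis // !angle_blockE.
Qed.

Lemma PTperp_principal : PTperp U V (Ut *m Vt^T) = GU *m angle_block sin sin *m GV^T.
Proof. by rewrite UtVtE PTperp_blocks ?mulTmx_compl_basis // angle_blockE. Qed.

Lemma UVt_sub_PT_principal a :
  U *m V^T - a *: PT U V (Ut *m Vt^T) =
  tangent_blocks U V GU GV (1%:M - a *: angle_block cos cos) (a *: angle_block sin cos)
    (a *: angle_block cos sin).
Proof.
rewrite PT_principal /tangent_blocks mulmxBr mulmxBl mulmx1 -!scalemxAr -!scalemxAl.
by rewrite !scalerDr !opprD !addrA addrAC.
Qed.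

Lemma gram_compl_angle_block a g :
  GU^T *m GU *m (a *: angle_block sin g) = a *: angle_block sin g.
Proof.
rewrite -angle_blockE -{2}(gram_compl_basis_sin hU hUt hLL hRL hsvdU).
by rewrite -scalemxAr !mulmxA.
Qed.

Lemma angle_block_gram_compl a f :
  a *: angle_block f sin *m (GV^T *m GV) = a *: angle_block f sin.
Proof.
rewrite -angle_blockE -{2}(sin_gram_compl_basis hV hVt hLR hRR hsvdV).
by rewrite -scalemxAl !mulmxA.
Qed.

Lemma specnorm_PTperp_principal a :
  specnorm (a *: PTperp U V (Ut *m Vt^T)) = specnorm (a *: angle_block sin sin).
Proof.
have -> : a *: PTperp U V (Ut *m Vt^T) = GU *m (a *: angle_block sin sin) *m GV^T.
  by rewrite PTperp_principal scalemxAl scalemxAr.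
rewrite specnorm_sandwich ?gram_compl_angle_block ?angle_block_gram_compl //.
exact: partial_isometry_compl_basis hV hVt hLR hRR hsvdV.
Qed.

End PrincipalAngles.

Unset Implicit Arguments.

Theorem lemma8 (R : realType) (n r : nat) (hn : (2 * r <= n)%N)
  (Xs : 'M[R]_n) (U V Ut Vt : 'M[R]_(n, r))
  (hrank : \rank Xs = r)
  (hcol : (Xs^T == U^T)%MS) (hrow : (Xs == V^T)%MS)
  (hU : U^T *m U = 1%:M) (hV : V^T *m V = 1%:M)
  (hUt : Ut^T *m Ut = 1%:M) (hVt : Vt^T *m Vt = 1%:M)
  (LL RL LR RR : 'M[R]_r)
  (hLL : LL^T *m LL = 1%:M) (hRL : RL^T *m RL = 1%:M)
  (hLR : LR^T *m LR = 1%:M) (hRR : RR^T *m RR = 1%:M)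
  (gam eta : 'I_r -> R)
  (hgam : forall k, 0 <= gam k <= pi / 2) (heta : forall k, 0 <= eta k <= pi / 2)
  (hsvdU : U^T *m Ut = LL *m diag_of cos gam *m RL^T)
  (hsvdV : V^T *m Vt = LR *m diag_of cos eta *m RR^T)
  (hmu : forall i, 0 < lev U i) (hnu : forall j, 0 < lev V j)
  (du dv : nat) (BU : 'M[R]_(n, du)) (BV : 'M[R]_(n, dv))
  (hBU : BU^T *m BU = 1%:M) (hBUs : (BU^T == (row_mx U Ut)^T)%MS)
  (hBV : BV^T *m BV = 1%:M) (hBVs : (BV^T == (row_mx V Vt)^T)%MS)
  (lam : R) (hlam : 0 <= lam) :
  let Acc := LL *m diag_of cos gam *m RL^T *m RR *m diag_of cos eta *m LR^T in
  let Acs := LL *m diag_of cos gam *m RL^T *m RR *m diag_of sin eta *m LR^T in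
  let Asc := LL *m diag_of sin gam *m RL^T *m RR *m diag_of cos eta *m LR^T in
  let Ass := LL *m diag_of sin gam *m RL^T *m RR *m diag_of sin eta *m LR^T in
  let W0 := U *m V^T - lam *: PT U V (Ut *m Vt^T) in
  let alpha1 := Num.sqrt (fnorm (1%:M - lam *: Acc) ^+ 2 + fnorm (lam *: Acs) ^+ 2
                          + fnorm (lam *: Asc) ^+ 2) in
  let alpha2 := specnorm (lam *: Ass) in
  let alpha3 := specnorm (1%:M - lam *: Acc) + specnorm (lam *: Asc)
                + specnorm (lam *: Acs) in
  let beta := Num.max 1 (Num.max
                (Num.sqrt (2 * \big[Num.max/0]_(i < n) (lev BU i / lev U i)))
                (Num.sqrt (2 * \big[Num.max/0]_(j < n) (lev BV j / lev V j)))) in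
  [/\ fnorm W0 = alpha1,
      specnorm (lam *: PTperp U V (Ut *m Vt^T)) = alpha2,
      mu_inf2_norm U V W0 <= alpha3 * beta
    & mu_inf_norm U V W0 <= alpha3 * beta].
Proof.
move=> Acc Acs Asc Ass W0 alpha1 alpha2 alpha3 beta.
pose GU := compl_basis U Ut LL RL gam; pose GV := compl_basis V Vt LR RR eta.
have hUG : U^T *m GU = 0 := mulTmx_compl_basis Ut LL RL gam hU.
have hVG : V^T *m GV = 0 := mulTmx_compl_basis Vt LR RR eta hV.
have pGV : partial_isometry GV := partial_isometry_compl_basis hV hVt hLR hRR hsvdV.
have hAsc : GU^T *m GU *m (lam *: Asc) = lam *: Asc :=
  gram_compl_angle_block LR RR eta hU hUt hLL hRL hsvdU lam cos.
have hAcs : lam *: Acs *m (GV^T *m GV) = lam *: Acs :=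
  angle_block_gram_compl LL RL gam hV hVt hLR hRR hsvdV lam cos.
have eW0 : W0 = tangent_blocks U V GU GV (1%:M - lam *: Acc) (lam *: Asc) (lam *: Acs) :=
  UVt_sub_PT_principal hU hV hUt hVt hLL hRL hLR hRR hsvdU hsvdV lam.
have beta_ge1 : 1 <= beta by rewrite /beta le_max lexx.
have hwU i : lev_weight U i * vnorm (GU^T *m delta_mx i 0) <= beta.
  apply: le_trans (lev_weight_compl_basis_le hU hUt hLL hRL hsvdU i hBU hBUs) _.
  by rewrite /beta !le_max lexx orbT.
have hwV j : lev_weight V j * vnorm (GV^T *m delta_mx j 0) <= beta.
  apply: le_trans (lev_weight_compl_basis_le hV hVt hLR hRR hsvdV j hBV hBVs) _.
  by rewrite /beta !le_max lexx !orbT.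
split.
- rewrite eW0 /alpha1 -(sqr_fnorm_tangent_blocks hU hV hUG hVG _ hAsc hAcs).
  by rewrite sqrtr_sqr ger0_norm ?fnorm_ge0.
- exact: specnorm_PTperp_principal hU hV hUt hVt hLL hRL hLR hRR hsvdU hsvdV lam.
- rewrite eW0; apply: mu_inf2_norm_tangent_blocks_le => //.
  exact: partial_isometry_compl_basis hU hUt hLL hRL hsvdU.
- by rewrite eW0; apply: mu_inf_norm_tangent_blocks_le.
Qed.
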